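(* Let $V$ be a family of subsets of a set $X$ with $\emptyset\in V$. The following are equivalent: (1) $V$ is a prering. (2) Every finite family $\{A_1,\dots,A_k\}\subset V$ has a finite refinement in $V$, i.e. there is a finite family of pairwise disjoint sets $B_1,\dots,B_t\in V$ such that each $A_i$ is the union of some of the $B_j$. (3) For every finite collection of linear spaces $Y_1,\dots,Y_n,W$ and every map $u:Y_1\times\cdots\times Y_n\to W$ with $u(0,\dots,0)=0$, whenever $s_j\in S(V,Y_j)$ for $j=1,\dots,n$, the function $s(x)=u(s_1(x),\dots,s_n(x))$ ($x\in X$) belongs to $S(V,W)$. (4) $S(V)$ is a ring of sets (closed under finite unions and set differences).
   Context: A family $V$ of subsets of $X$ containing $\emptyset$ is a prering if for all $A_1,A_2\in V$ both $A_1\cap A_2$ and $A_1\setminus A_2$ belong to $S(V)$, where $S(V)$ is the family of all sets that are unions of finitely many pairwise disjoint members of $V$. For a linear space $Y$, $S(V,Y)$ denotes the set of functions $X\to Y$ of the form $y_1c_{A_1}+\dots+y_kc_{A_k}$ with $y_i\in Y$, $A_i\in V$ pairwise disjoint ($c_A$ is the characteristic function of $A$). *)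

From HB Require Import structures.
From mathcomp Require Import all_boot all_order all_algebra.
From Stdlib Require Import ClassicalEpsilon.
Set Implicit Arguments. Unset Strict Implicit. Unset Printing Implicit Defensive.
Import GRing.Theory.
Local Open Scope ring_scope.

Definition pset (X : Type) := X -> Prop.
Definition pset0 {X : Type} : pset X := fun _ => False.
Definition psetI {X : Type} (A B : pset X) : pset X := fun x => A x /\ B x.
Definition psetU {X : Type} (A B : pset X) : pset X := fun x => A x \/ B x.
Definition psetD {X : Type} (A B : pset X) : pset X := fun x => A x /\ ~ B x.

Definition pw_disjoint {X : Type} {k : nat} (B : 'I_k -> pset X) : Prop :=
  forall i j : 'I_k, i != j -> forall x, B i x -> B j x -> False.

Definition inSV {X : Type} (V : pset X -> Prop) (A : pset X) : Prop :=
  exists (k : nat) (B : 'I_k -> pset X),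
    (forall i, V (B i)) /\ pw_disjoint B /\
    (forall x, A x <-> exists i, B i x).

Definition prering {X : Type} (V : pset X -> Prop) : Prop :=
  V pset0 /\
  forall A1 A2, V A1 -> V A2 -> inSV V (psetI A1 A2) /\ inSV V (psetD A1 A2).

Definition charf {X : Type} {R : pzRingType} {Y : lmodType R}
  (A : pset X) (y : Y) : X -> Y :=
  fun x => if excluded_middle_informative (A x) then y else 0.

Definition inSVY {X : Type} {R : pzRingType} (V : pset X -> Prop)
  (Y : lmodType R) (f : X -> Y) : Prop :=
  exists (k : nat) (y : 'I_k -> Y) (A : 'I_k -> pset X),
    (forall i, V (A i)) /\ pw_disjoint A /\
    (forall x, f x = \sum_(i < k) charf (A i) (y i) x).

Definition finite_refinement {X : Type} (V : pset X -> Prop) : Prop :=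
  forall (k : nat) (A : 'I_k -> pset X), (forall i, V (A i)) ->
    exists (t : nat) (B : 'I_t -> pset X),
      (forall j, V (B j)) /\ pw_disjoint B /\
      forall i, exists J : 'I_t -> bool,
        forall x, A i x <-> exists j, J j /\ B j x.

Definition superposition_closed {X : Type} (K : fieldType) (V : pset X -> Prop) : Prop :=
  forall (n : nat) (Y : 'I_n -> lmodType K) (W : lmodType K)
         (u : (forall j : 'I_n, Y j) -> W),
    u (fun j => 0) = 0 ->
    forall s : forall j : 'I_n, X -> Y j,
      (forall j, inSVY V (s j)) ->
      inSVY V (fun x => u (fun j => s j x)).

Definition SV_ring {X : Type} (V : pset X -> Prop) : Prop :=
  inSV V pset0 /\
  forall A B, inSV V A -> inSV V B -> inSV V (psetU A B) /\ inSV V (psetD A B).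

From HB Require Import structures.
From mathcomp Require Import all_boot all_order all_algebra.
From Stdlib Require Import Classical ClassicalEpsilon FunctionalExtensionality PropExtensionality.
Set Implicit Arguments. Unset Strict Implicit. Unset Printing Implicit Defensive.

(* (1) => (4): removing a member of V from a set of S(V) leaves a set of S(V), since
   it removes it from each of the disjoint pieces; iterating, S(V) is closed under
   differences, and A ∪ B is the disjoint union of A \ B and B.
   (4) => (2): the atoms of A_1, ..., A_k (the points of their union with a prescribed
   membership pattern) are pairwise disjoint and lie in the ring S(V); decomposing
   every atom into members of V yields the refinement.
   (2) => (3): refine all the pieces of the step functions s_j at once; every s_j, hence
   s, is constant on each member of the refinement and, as u(0, ..., 0) = 0, s vanishes
   off their union.
   (3) => (4): the superpositions of the indicators of A and B by
   u(a, b) = [a <> 0 or b <> 0] and u(a, b) = [a <> 0 and b = 0] are the indicators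
   of A ∪ B and A \ B.
   (4) => (1): A ∩ B = A \ (A \ B). *)

Lemma pset_ext (X : Type) (A B : pset X) : (forall x, A x <-> B x) -> A = B.
Proof.
by move=> AB; apply: functional_extensionality => x; apply: propositional_extensionality.
Qed.

Definition pmem (X : Type) (A : pset X) (x : X) : bool :=
  if excluded_middle_informative (A x) then true else false.

Lemma pmemP (X : Type) (A : pset X) x : reflect (A x) (pmem A x).
Proof. by rewrite /pmem; case: excluded_middle_informative => Ax; constructor. Qed.

Definition psubset (X : Type) (A B : pset X) : Prop := forall x, A x -> B x.

Section DisjointRefinement.
Variables (X : Type) (V : pset X -> Prop).

Definition disjoint_fam (T : eqType) (B : T -> pset X) : Prop :=
  forall i j, i != j -> forall x, B i x -> B j x -> False.

Lemma disjoint_fam_enum (T : finType) (B : T -> pset X) :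
  disjoint_fam B -> pw_disjoint (fun j : 'I_#|T| => B (enum_val j)).
Proof. by move=> DB i j ne; apply: DB; rewrite (inj_eq enum_val_inj). Qed.

Lemma inSV_V A : V A -> inSV V A.
Proof.
move=> VA; exists 1, (fun _ => A); split=> //; split=> [i j|x].
  by rewrite (ord1 i) (ord1 j) eqxx.
by split=> [Ax|[]//]; exists ord0.
Qed.

Lemma inSV_disjoint_refinement (T : finType) (C : T -> pset X) :
  (forall p, inSV V (C p)) -> disjoint_fam C ->
  exists t (B : 'I_t -> pset X) (c : 'I_t -> T),
    [/\ forall j, V (B j), pw_disjoint B, forall j x, B j x -> C (c j) x
      & forall p x, C p x -> exists2 j, c j = p & B j x].
Proof.
move=> SVC DC.
have dec p : {k : nat & {D : 'I_k -> pset X |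
    [/\ forall i, V (D i), pw_disjoint D & forall x, C p x <-> exists i, D i x]}}.
  have [k /constructive_indefinite_description [D [VD [DD CD]]]] :=
    constructive_indefinite_description _ (SVC p).
  by exists k, D; split.
pose Dp p := sval (projT2 (dec p)).
have decP p := svalP (projT2 (dec p)).
have DpC q i y : Dp q i y -> C q y.
  by case: (decP q) => _ _ CD Dy; apply/CD; exists i.
pose D (s : {p : T & 'I_(projT1 (dec p))}) := Dp (tag s) (tagged s).
exists #|{: {p : T & 'I_(projT1 (dec p))}}|,
  (fun j => D (enum_val j)), (fun j => tag (enum_val j)).
split=> [j||j x|p x].
- by case: (decP (tag (enum_val j))) => VD _ _; apply: VD.
- apply: disjoint_fam_enum => -[p i] [p' i'] ne x; rewrite /D /=.
  have [ep|ne_p] := eqVneq p p'; last by move=> /DpC Cx /DpC; apply: DC Cx.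
  move: i' ne; rewrite -ep => i' ne.
  by case: (decP p) => _ DD _; apply: DD; apply: contra ne => /eqP ->.
- exact: DpC.
- case: (decP p) => _ _ /[apply] -[i Di].
  by exists (enum_rank (Tagged (fun p => 'I_(projT1 (dec p))) i)); rewrite enum_rankK.
Qed.

Lemma inSV_disjoint_bigU (T : finType) (C : T -> pset X) :
  (forall p, inSV V (C p)) -> disjoint_fam C -> inSV V (fun x => exists p, C p x).
Proof.
move=> SVC DC; have [t [B [c [VB DB BC CB]]]] := inSV_disjoint_refinement SVC DC.
exists t, B; do 2!split=> //; split=> [[p /CB[j _ Bx]]|[j /BC Cx]]; first by exists j.
by exists (c j).
Qed.

Lemma inSV_disjointU A B : inSV V A -> inSV V B -> (forall x, A x -> B x -> False) ->
  inSV V (psetU A B).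
Proof.
move=> SVA SVB AB.
have -> : psetU A B = fun x => exists b : bool, (if b then A else B) x.
  by apply: pset_ext => x; split=> [[Ax|Bx]|[[]]]; [exists true|exists false|left|right].
by apply: inSV_disjoint_bigU => [[]//|[] [] //= _ x Cx Cy];
  first [exact: AB Cx Cy | exact: AB Cy Cx].
Qed.

End DisjointRefinement.

Section Prering.
Variables (X : Type) (V : pset X -> Prop).
Hypothesis preV : prering V.

Lemma inSV_DV A C : inSV V A -> V C -> inSV V (psetD A C).
Proof.
move=> [k [a [Va [Da Aa]]]] VC.
have -> : psetD A C = fun x => exists i, psetD (a i) C x.
  apply: pset_ext => x; split=> [[/Aa[i ai] nC]|[i [ai nC]]]; first by exists i.
  by split=> //; apply/Aa; exists i.
apply: inSV_disjoint_bigU => [i|i j ne x [ai _] [aj _]]; last exact: Da i j ne x ai aj.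
exact: (proj2 (proj2 preV _ _ (Va i) VC)).
Qed.

Lemma inSV_D_bigU m (b : 'I_m -> pset X) A : (forall j, V (b j)) -> inSV V A ->
  inSV V (fun x => A x /\ ~ exists j, b j x).
Proof.
elim: m b A => [|m IHm] b A Vb SVA.
  by congr (inSV V _): SVA; apply: pset_ext => x; split=> [Ax|[]//]; split=> // -[[]].
have -> : (fun x => A x /\ ~ exists j, b j x) =
    fun x => psetD A (b ord0) x /\ ~ exists j, b (lift ord0 j) x.
  apply: pset_ext => x; split=> [[Ax nb]|[[Ax nb0] nb]].
    split; first by split=> // b0; apply: nb; exists ord0.
    by move=> [j bj]; apply: nb; exists (lift ord0 j).
  by split=> // -[j]; case: (unliftP ord0 j) => [j' ->|->]; [move=> bj; apply: nb; exists j'|].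
by apply: IHm => [j|]; [exact: Vb|exact: inSV_DV].
Qed.

Lemma inSV_D A B : inSV V A -> inSV V B -> inSV V (psetD A B).
Proof.
move=> SVA [m [b [Vb [_ Bb]]]].
have -> : psetD A B = fun x => A x /\ ~ exists j, b j x.
  by apply: pset_ext => x; rewrite /psetD Bb.
exact: inSV_D_bigU.
Qed.

Lemma prering_SV_ring : SV_ring V.
Proof.
split=> [|A B SVA SVB]; first exact: inSV_V (proj1 preV).
have DU : psetU A B = psetU (psetD A B) B.
  by apply: pset_ext => x; rewrite /psetU /psetD; have [|] := classic (B x); tauto.
split; last exact: inSV_D.
by rewrite DU; apply: inSV_disjointU => // [|x [_ nB]//]; exact: inSV_D.
Qed.

End Prering.

Section RingRefinement.
Variables (X : Type) (V : pset X -> Prop).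
Hypothesis ringV : SV_ring V.

Let ringU A B : inSV V A -> inSV V B -> inSV V (psetU A B).
Proof. by move=> SVA SVB; case: (proj2 ringV A B SVA SVB). Qed.

Let ringD A B : inSV V A -> inSV V B -> inSV V (psetD A B).
Proof. by move=> SVA SVB; case: (proj2 ringV A B SVA SVB). Qed.

Lemma inSV_bigU k (D : 'I_k -> pset X) :
  (forall i, inSV V (D i)) -> inSV V (fun x => exists i, D i x).
Proof.
elim: k D => [|k IHk] D SVD.
  by congr (inSV V _): (proj1 ringV); apply: pset_ext => x; split=> [[]|[[]]].
have -> : (fun x => exists i, D i x) = psetU (D ord0) (fun x => exists i, D (lift ord0 i) x).
  apply: pset_ext => x; split=> [[i]|[D0|[i Di]]]; last 2 first.
  - by exists ord0.
  - by exists (lift ord0 i).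
  by case: (unliftP ord0 i) => [j ->|->] Dx; [right; exists j|left].
by apply: ringU => //; apply: IHk.
Qed.

Definition atom k (A : 'I_k -> pset X) (f : {ffun 'I_k -> bool}) : pset X :=
  fun x => (exists i, A i x) /\ forall i, A i x <-> f i.

Lemma inSV_atom k (A : 'I_k -> pset X) f :
  (forall i, inSV V (A i)) -> inSV V (atom A f).
Proof.
move=> SVA; pose U x := exists i, A i x.
pose D i := if f i then psetD U (A i) else A i.
have -> : atom A f = psetD U (fun x => exists i, D i x).
  apply: pset_ext => x; rewrite /atom /psetD /D; split=> [[Ux Af]|[Ux nD]].
    split=> // -[i]; case: (f i) (Af i) => Ai; last by move/Ai.
    by move=> [_]; apply; apply/Ai.
  split=> // i; case E: (f i); split=> //.
  - by move=> _; apply: NNPP => nA; apply: nD; exists i; rewrite E.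
  - by move=> Ai; case: nD; exists i; rewrite E.
have SVU : inSV V U by apply: inSV_bigU.
apply: ringD => //; apply: inSV_bigU => i; rewrite /D.
by case: (f i) => //; apply: ringD.
Qed.

Lemma atom_disjoint k (A : 'I_k -> pset X) : disjoint_fam (atom A).
Proof.
move=> f g /eqP fg x [_ Af] [_ Ag]; apply: fg; apply/ffunP => i.
by apply/idP/idP => [/Af/Ag|/Ag/Af].
Qed.

Lemma atom_cover k (A : 'I_k -> pset X) i x :
  A i x -> exists2 f : {ffun 'I_k -> bool}, f i & atom A f x.
Proof.
move=> Aix; exists [ffun j => pmem (A j) x]; first by rewrite ffunE; apply/pmemP.
by split=> [|j]; [exists i | rewrite ffunE; split=> /pmemP].
Qed.

Lemma SV_ring_refinement : finite_refinement V.
Proof.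
move=> k A VA.
have [t [B [c [VB DB Batom atomB]]]] :=
  inSV_disjoint_refinement (fun f => inSV_atom f (fun i => inSV_V (VA i))) (@atom_disjoint k A).
exists t, B; do 2!split=> //; move=> i; exists (fun j => c j i) => x; split.
  by move=> /atom_cover [f fi /atomB [j cj Bx]]; exists j; rewrite cj.
by move=> [j [cji /Batom [_ Ac]]]; apply/Ac.
Qed.

End RingRefinement.

Import GRing.Theory.
Local Open Scope ring_scope.

Section StepFunctions.
Variables (X : Type) (V : pset X -> Prop) (R : pzRingType).

Lemma charfE (Y : lmodType R) (A : pset X) (y : Y) x :
  charf A y x = if pmem A x then y else 0.
Proof. by rewrite /charf /pmem; case: excluded_middle_informative. Qed.

Lemma sum_charf_in (Y : lmodType R) k (A : 'I_k -> pset X) (y : 'I_k -> Y) x l :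
  pw_disjoint A -> A l x -> \sum_(i < k) charf (A i) (y i) x = y l.
Proof.
move=> DA Al; rewrite (bigD1 l) //= big1 ?addr0 => [|i ne]; rewrite charfE.
  by case: pmemP.
by case: pmemP => // Ai; case: (DA i l ne x Ai Al).
Qed.

Lemma sum_charf_out (Y : lmodType R) k (A : 'I_k -> pset X) (y : 'I_k -> Y) x :
  (forall i, ~ A i x) -> \sum_(i < k) charf (A i) (y i) x = 0.
Proof. by move=> nA; rewrite big1 // => i _; rewrite charfE; case: pmemP => // /nA. Qed.

Lemma inSVY_charf (Y : lmodType R) (A : pset X) (y : Y) : inSV V A -> inSVY V (charf A y).
Proof.
move=> [k [B [VB [DB AB]]]]; exists k, (fun _ => y), B; split=> //; split=> // x.
rewrite {1}charfE; case: pmemP => [/AB [i Bi]|nA]; first by rewrite (sum_charf_in _ DB Bi).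
by rewrite sum_charf_out // => i Bi; apply: nA; apply/AB; exists i.
Qed.

Lemma inSV_charf (Y : lmodType R) (A : pset X) (y : Y) :
  V pset0 -> y != 0 -> inSVY V (charf A y) -> inSV V A.
Proof.
move=> V0 y0 [k [z [B [VB [DB AB]]]]].
exists k, (fun i => if z i != 0 then B i else pset0); split; [|split].
- by move=> i; case: (z i != 0).
- move=> i j ne x Bi Bj; apply: (DB i j ne x); [move: Bi|move: Bj]; by case: (_ != 0).
move=> x; move: (AB x); rewrite charfE.
have [[i Bi]|nB] := classic (exists i, B i x).
  rewrite (sum_charf_in _ DB Bi); case: pmemP => Ax zi.
    by split=> // _; exists i; rewrite -zi y0.
  split=> // -[j]; have [->|ne] := eqVneq j i; first by rewrite -zi eqxx.
  by case: (z j != 0) => // Bj; case: (DB _ _ ne x Bj Bi).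
rewrite sum_charf_out => [|i Bi]; last by apply: nB; exists i.
case: pmemP => Ax y_eq0; first by rewrite y_eq0 eqxx in y0.
by split=> // -[j]; case: (z j != 0) => // Bj; case: nB; exists j.
Qed.

Definition step_on (Y : lmodType R) t (B : 'I_t -> pset X) (f : X -> Y) : Prop :=
  (forall l, exists v, forall x, B l x -> f x = v) /\ (forall x, (forall l, ~ B l x) -> f x = 0).

Lemma step_on_inSVY (Y : lmodType R) t (B : 'I_t -> pset X) (f : X -> Y) :
  (forall l, V (B l)) -> pw_disjoint B -> step_on B f -> inSVY V f.
Proof.
move=> VB DB [Bf fout].
pose v l := sval (constructive_indefinite_description _ (Bf l)).
exists t, v, B; split=> //; split=> // x.
have [[l Bl]|nB] := classic (exists l, B l x).
  by rewrite (sum_charf_in _ DB Bl) (svalP (constructive_indefinite_description _ (Bf l))).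
by rewrite fout ?sum_charf_out // => l Bl; apply: nB; exists l.
Qed.

Lemma step_on_sum (Y : lmodType R) k (A : 'I_k -> pset X) (y : 'I_k -> Y)
    t (B : 'I_t -> pset X) (f : X -> Y) :
  pw_disjoint A -> pw_disjoint B ->
  (forall i x, A i x -> exists2 l, psubset (B l) (A i) & B l x) ->
  (forall x, f x = \sum_(i < k) charf (A i) (y i) x) -> step_on B f.
Proof.
move=> DA DB AB fE; split=> [l|x nB]; last first.
  by rewrite fE; apply: sum_charf_out => i /AB [l _ Bl]; apply: (nB l).
have [[i BA]|nBA] := classic (exists i, psubset (B l) (A i)).
  by exists (y i) => x Bx; rewrite fE (sum_charf_in _ DA (BA x Bx)).
exists 0 => x Bx; rewrite fE; apply: sum_charf_out => i Ai; apply: nBA; exists i.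
have [l' BA Bl'] := AB i x Ai; have [<-//|ne] := eqVneq l' l.
by case: (DB _ _ ne x Bl' Bx).
Qed.

Lemma step_on_comp (J : Type) (Y : J -> lmodType R) (W : lmodType R)
    (u : (forall j, Y j) -> W) t (B : 'I_t -> pset X) (s : forall j, X -> Y j) :
  u (fun j => 0) = 0 -> (forall j, step_on B (s j)) ->
  step_on B (fun x => u (fun j => s j x)).
Proof.
move=> u0 sB; split=> [l|x nB].
  pose v j := sval (constructive_indefinite_description _ (proj1 (sB j) l)).
  exists (u v) => x Bx; congr u; apply: functional_extensionality_dep => j.
  exact: (svalP (constructive_indefinite_description _ (proj1 (sB j) l))).
by rewrite -u0; congr u; apply: functional_extensionality_dep => j; apply: (proj2 (sB j)).
Qed.

End StepFunctions.

Section Superposition.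
Variables (X : Type) (V : pset X -> Prop) (K : fieldType).

Lemma finite_refinement_fin (T : finType) (A : T -> pset X) :
  finite_refinement V -> (forall p, V (A p)) ->
  exists t (B : 'I_t -> pset X), [/\ forall l, V (B l), pw_disjoint B &
    forall p x, A p x -> exists2 l, psubset (B l) (A p) & B l x].
Proof.
move=> refV VA.
have [t [B [VB [DB AB]]]] := refV _ (fun i : 'I_#|T| => A (enum_val i)) (fun i => VA _).
exists t, B; split=> // p x Ax.
have [J JB] := AB (enum_rank p); rewrite enum_rankK in JB.
have [l [Jl Bl]] := proj1 (JB x) Ax.
by exists l => // y By; apply/JB; exists l.
Qed.

Lemma finite_refinement_step_on n (Y : 'I_n -> lmodType K) (s : forall j, X -> Y j) :
  finite_refinement V -> (forall j, inSVY V (s j)) ->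
  exists t (B : 'I_t -> pset X),
    [/\ forall l, V (B l), pw_disjoint B & forall j, step_on B (s j)].
Proof.
move=> refV SVs.
have dec j : {k : nat & {y : 'I_k -> Y j & {A : 'I_k -> pset X |
    [/\ forall i, V (A i), pw_disjoint A & forall x, s j x = \sum_(i < k) charf (A i) (y i) x]}}}.
  have [k /constructive_indefinite_description [y
      /constructive_indefinite_description [A [VA [DA sA]]]]] :=
    constructive_indefinite_description _ (SVs j).
  by exists k, y, A; split.
pose A j := sval (projT2 (projT2 (dec j))).
have decP j := svalP (projT2 (projT2 (dec j))).
have VA (p : {j : 'I_n & 'I_(projT1 (dec j))}) : V (A (tag p) (tagged p)).
  by case: (decP (tag p)) => VA _ _; apply: VA.
have [t [B [VB DB AB]]] := finite_refinement_fin refV VA.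
exists t, B; split=> // j; have [_ DA sA] := decP j.
by apply: step_on_sum DA DB _ sA => i x /(AB (Tagged _ i)).
Qed.

Lemma finite_refinement_superposition : finite_refinement V -> superposition_closed K V.
Proof.
move=> refV n Y W u u0 s SVs.
have [t [B [VB DB sB]]] := finite_refinement_step_on refV SVs.
exact: step_on_inSVY VB DB (step_on_comp u0 sB).
Qed.

Hypothesis V0 : V pset0.

Lemma superposition_bool_comb (op : bool -> bool -> bool) (A B C : pset X) :
  superposition_closed K V -> op false false = false ->
  (forall x, pmem C x = op (pmem A x) (pmem B x)) -> inSV V A -> inSV V B -> inSV V C.
Proof.
move=> supV op0 CE SVA SVB.
pose s (j : 'I_2) : X -> K^o := charf (if j == ord0 then A else B) 1.
pose u (v : 'I_2 -> K^o) : K^o := if op (v ord0 != 0) (v ord_max != 0) then 1 else 0.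
have u0 : u (fun _ => 0) = 0 by rewrite /u eqxx op0.
have SVs j : inSVY V (s j) by apply: inSVY_charf; case: (j == ord0).
apply: (inSV_charf V0 (oner_neq0 K^o)).
suff -> : charf C 1 = fun x => u (fun j => s j x) by exact: supV.
apply: functional_extensionality => x; rewrite /u /s !charfE CE /=.
by case: (pmem A x); case: (pmem B x); rewrite ?oner_eq0 ?eqxx.
Qed.

Lemma superposition_SV_ring : superposition_closed K V -> SV_ring V.
Proof.
move=> supV; split=> [|A B SVA SVB]; first exact: inSV_V.
split.
  apply: (superposition_bool_comb (op := orb) supV _ _ SVA SVB) => // x.
  by apply/pmemP/orP => -[] /pmemP; [left|right|left|right].
apply: (superposition_bool_comb (op := fun a b => a && ~~ b) supV _ _ SVA SVB) => // x.
apply/pmemP/andP => -[Ax nBx]; split.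
- exact/pmemP.
- by apply/negP => /pmemP.
- exact/pmemP.
- by move/pmemP; apply/negP.
Qed.

End Superposition.

Lemma SV_ring_prering (X : Type) (V : pset X -> Prop) : V pset0 -> SV_ring V -> prering V.
Proof.
move=> V0 [_ ringV]; split=> // A1 A2 V1 V2.
have [_ SVD] := ringV _ _ (inSV_V V1) (inSV_V V2).
have [_ SVI] := ringV _ _ (inSV_V V1) SVD.
split=> //; congr (inSV V _): SVI; apply: pset_ext => x; rewrite /psetD /psetI.
by split=> [[A1x nD]|[A1x A2x]]; [split=> //; apply: NNPP => nA2; apply: nD | split=> // -[]].
Qed.

Theorem mainTheorem2 (K : fieldType) (X : Type) (V : pset X -> Prop) :
  V pset0 ->
  [<-> prering V; finite_refinement V; superposition_closed K V; SV_ring V].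
Proof.
move=> V0; tfae=> [preV|refV|supV|ringV].
- exact/SV_ring_refinement/prering_SV_ring.
- exact: finite_refinement_superposition.
- exact: superposition_SV_ring supV.
- exact: SV_ring_prering.
Qed.
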